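(* Every semigroup $S$ satisfying Condition $( * )$ is a naturally partially ordered monoid, i.e. the relation $a\leq b\iff bS\subseteq aS$ on $S$ is a partial order.
   Context: For a commutative semigroup $S$ with zero $0$, $A(s)=\{x\in S: xs=0\}$. A semigroup $S$ satisfies Condition $( * )$ if: (1) $S$ is a commutative monoid with a zero; (2) $A(s)\neq\{0\}$ for every non-identity $s\in S$; (3) $A(s)=A(t)$ implies $s=t$ for all $s,t\in S$. *)

Definition Ann {S : Type} (mul : S -> S -> S) (zero : S) (s : S) : S -> Prop :=
  fun x => mul x s = zero.

Definition ConditionStar {S : Type} (mul : S -> S -> S) : Prop :=
  (forall x y z, mul x (mul y z) = mul (mul x y) z) /\
  (forall x y, mul x y = mul y x) /\
  exists (one zero : S),
    (forall x, mul one x = x /\ mul x one = x) /\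
    (forall x, mul zero x = zero /\ mul x zero = zero) /\
    (forall s, s <> one -> exists x, Ann mul zero s x /\ x <> zero) /\
    (forall s t, (forall x, Ann mul zero s x <-> Ann mul zero t x) -> s = t).

Definition nat_le {S : Type} (mul : S -> S -> S) (a b : S) : Prop :=
  forall x, (exists y, x = mul b y) -> exists z, x = mul a z.

Definition is_partial_order {S : Type} (R : S -> S -> Prop) : Prop :=
  (forall a, R a a) /\
  (forall a b c, R a b -> R b c -> R a c) /\
  (forall a b, R a b -> R b a -> a = b).


(* If [a] and [b] generate the same principal ideal then [a = b u] and [b = a v],
   so [x a = 0] iff [x b = 0]; condition (3) then forces [a = b]. *)

Section NaturalOrder.

Variables (S : Type) (mul : S -> S -> S).

Lemma nat_le_refl (a : S) : nat_le mul a a.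
Proof. intros x Hx; exact Hx. Qed.

Lemma nat_le_trans (a b c : S) :
  nat_le mul a b -> nat_le mul b c -> nat_le mul a c.
Proof. intros Hab Hbc x Hx; exact (Hab x (Hbc x Hx)). Qed.

Variables (one zero : S).
Hypothesis mulA : forall x y z, mul x (mul y z) = mul (mul x y) z.
Hypothesis mulx1 : forall x, mul x one = x.
Hypothesis mul0x : forall x, mul zero x = zero.

Lemma nat_le_factor (a b : S) : nat_le mul a b -> exists u, b = mul a u.
Proof. intros Hab; apply Hab; exists one; symmetry; apply mulx1. Qed.

Lemma Ann_mulr (a u x : S) : Ann mul zero a x -> Ann mul zero (mul a u) x.
Proof. unfold Ann; intros Hx; rewrite mulA, Hx; apply mul0x. Qed.

Hypothesis Ann_inj :
  forall s t, (forall x, Ann mul zero s x <-> Ann mul zero t x) -> s = t.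

Lemma nat_le_antisym (a b : S) : nat_le mul a b -> nat_le mul b a -> a = b.
Proof.
  intros Hab Hba.
  destruct (nat_le_factor a b Hab) as [u Hu].
  destruct (nat_le_factor b a Hba) as [v Hv].
  apply Ann_inj; intros x; split.
  - intros Hx; rewrite Hu; apply Ann_mulr, Hx.
  - intros Hx; rewrite Hv; apply Ann_mulr, Hx.
Qed.

End NaturalOrder.

Theorem lemma2 (S : Type) (mul : S -> S -> S) :
  ConditionStar mul -> is_partial_order (nat_le mul).
Proof.
  intros [mulA [_ [one [zero [Hone [Hzero [_ Ann_inj]]]]]]].
  split; [|split].
  - apply nat_le_refl.
  - apply nat_le_trans.
  - apply (nat_le_antisym S mul one zero mulA); auto.
    + intros x; apply Hone.
    + intros x; apply Hzero.
Qed.
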